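(* Let $A$ be a ring and $I\subset A$ an ideal such that $A_{I\text{-tor}}\cap I=(0)$. Then $A$ is $I$-adically separated (resp. $I$-adically complete) if and only if $A/A_{I\text{-tor}}$ is $I$-adically separated (resp. $I$-adically complete).
   Context: Rings are commutative with $1$. $A_{I\text{-tor}}$ is the ideal of $x\in A$ such that for every $a\in I$ there is $n>0$ with $a^nx=0$. ''$I$-adically complete'' means Hausdorff complete for the $I$-adic topology. *)

From HB Require Import structures.
From mathcomp Require Import all_boot all_order all_algebra.
Set Implicit Arguments. Unset Strict Implicit. Unset Printing Implicit Defensive.
Import GRing.Theory.
Local Open Scope ring_scope.

Definition is_ideal (A : comPzRingType) (I : A -> Prop) : Prop :=
  [/\ I 0, (forall x y, I x -> I y -> I (x + y)) & (forall a x, I x -> I (a * x))].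

Definition ideal_mul (A : comPzRingType) (J K : A -> Prop) : A -> Prop :=
  fun x => exists s : seq (A * A),
    (forall p, p \in s -> J p.1 /\ K p.2) /\ x = \sum_(p <- s) p.1 * p.2.

Fixpoint ideal_pow (A : comPzRingType) (I : A -> Prop) (n : nat) : A -> Prop :=
  match n with
  | 0 => fun _ => True
  | n'.+1 => ideal_mul I (ideal_pow I n')
  end.

Definition itor (A : comPzRingType) (I : A -> Prop) (x : A) : Prop :=
  forall a, I a -> exists n : nat, (0 < n)%N /\ a ^+ n * x = 0.

Definition adic_separated (A : comPzRingType) (I : A -> Prop) : Prop :=
  forall x, (forall n, ideal_pow I n x) -> x = 0.

Definition adic_cauchy (A : comPzRingType) (I : A -> Prop) (u : nat -> A) : Prop :=
  forall n, exists N, forall m k, (N <= m)%N -> (N <= k)%N -> ideal_pow I n (u m - u k).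

Definition adic_converges (A : comPzRingType) (I : A -> Prop) (u : nat -> A) (l : A) : Prop :=
  forall n, exists N, forall m, (N <= m)%N -> ideal_pow I n (u m - l).

Definition adic_complete (A : comPzRingType) (I : A -> Prop) : Prop :=
  adic_separated I /\
  (forall u : nat -> A, adic_cauchy I u -> exists l, adic_converges I u l).

(* The extended ideal I B = f(I) along a (surjective) ring map f. *)
Definition image_ideal (A B : comPzRingType) (f : A -> B) (I : A -> Prop) : B -> Prop :=
  fun y => exists a, I a /\ f a = y.

(* If [ker pi] meets [I] only in [0], then [pi] is injective on every coset
   [x + I], and an element [x] of [I] lies in [I^n] as soon as [pi x] lies in
   [(IB)^n]: lift [pi x] to some [j] in [I^n], and [x - j] lies in [I] and in
   [ker pi].  Since the [I]-adic and [IB]-adic filtrations are contained in [I]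
   and [IB] from level one on, separation, Cauchy sequences and limits transfer
   along [pi] in both directions.  The hypothesis holds for the quotient map
   [A -> A/A_{I-tor}] because [A_{I-tor}] meets [I] only in [0]. *)
From HB Require Import structures.
From mathcomp Require Import all_boot all_order all_algebra.
From Stdlib Require Import IndefiniteDescription.
Local Open Scope ring_scope.
Import GRing.Theory.
Set Implicit Arguments.
Unset Strict Implicit.

Section Ideals.
Variable A : comPzRingType.
Implicit Types (J K : A -> Prop) (x y : A).

Lemma ideal_opp J x : is_ideal J -> J x -> J (- x).
Proof. by case=> _ _ hM Jx; rewrite -mulN1r; apply: hM. Qed.

Lemma ideal_sub J x y : is_ideal J -> J x -> J y -> J (x - y).
Proof. by move=> hJ Jx Jy; case: (hJ) => _ hD _; apply: hD => //; apply: ideal_opp. Qed.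

Lemma ideal_sub_trans J x y z : is_ideal J -> J (x - y) -> J (y - z) -> J (x - z).
Proof. by move=> [_ hD _] Jxy Jyz; rewrite -[x](subrK y) -addrA; apply: hD. Qed.

Lemma ideal_mul_subl J K x : is_ideal J -> ideal_mul J K x -> J x.
Proof.
case=> J0 hD hM [s [hs ->]]; elim: s hs => [|p s IHs] hs; first by rewrite big_nil.
rewrite big_cons; apply: hD; last by apply: IHs => q qs; apply: hs; rewrite inE qs orbT.
by rewrite mulrC; apply: hM; exact: (hs p (mem_head _ _)).1.
Qed.

Lemma ideal_pow_succ_sub J n x : is_ideal J -> ideal_pow J n.+1 x -> J x.
Proof. exact: ideal_mul_subl. Qed.

Lemma adic_cauchy_ideal J (u : nat -> A) : is_ideal J -> adic_cauchy J u ->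
  exists N, forall m k, (N <= m)%N -> (N <= k)%N -> J (u m - u k).
Proof.
move=> hJ /(_ 1%N) [N uN]; exists N => m k hm hk.
exact: ideal_pow_succ_sub hJ (uN m k hm hk).
Qed.

Lemma adic_converges_ideal J (u : nat -> A) l : is_ideal J -> adic_converges J u l ->
  exists N, forall m, (N <= m)%N -> J (u m - l).
Proof.
by move=> hJ /(_ 1%N) [N uN]; exists N => m hm; exact: ideal_pow_succ_sub hJ (uN m hm).
Qed.

End Ideals.

Section ImageIdeal.
Variables (A B : comPzRingType) (pi : {rmorphism A -> B}) (I : A -> Prop).
Local Notation IB := (image_ideal pi I).

Lemma is_ideal_image : (forall y, exists x, pi x = y) -> is_ideal I -> is_ideal IB.
Proof.
move=> surj [I0 hD hM]; split.
- by exists 0; rewrite rmorph0.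
- by move=> _ _ [x [Ix <-]] [y [Iy <-]]; exists (x + y); rewrite rmorphD; split => //; apply: hD.
- move=> b _ [x [Ix <-]]; have [a <-] := surj b.
  by exists (a * x); rewrite rmorphM; split => //; apply: hM.
Qed.

Lemma image_ideal_lift x0 y : IB (pi x0 - y) -> exists x, pi x = y /\ I (x0 - x).
Proof.
case=> a [Ia pa]; exists (x0 - a); split; last by rewrite opprB addrC subrK.
by rewrite rmorphB pa opprB addrC subrK.
Qed.

Lemma ideal_pow_image n x : ideal_pow I n x -> ideal_pow IB n (pi x).
Proof.
elim: n x => [//|n IHn] _ [s [hs ->]]; exists [seq (pi p.1, pi p.2) | p <- s]; split.
  by move=> _ /mapP [p ps ->] /=; have [Ip1 Ip2] := hs p ps; split; [exists p.1 | apply: IHn].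
by rewrite rmorph_sum big_map; apply: eq_bigr => p _; rewrite rmorphM.
Qed.

Lemma ideal_mul_lift (K : A -> Prop) (K' : B -> Prop) y :
  (forall z, K' z -> exists x, K x /\ pi x = z) ->
  ideal_mul IB K' y -> exists x, ideal_mul I K x /\ pi x = y.
Proof.
move=> liftK [s [hs ->]]; elim: s hs => [|p s IHs] hs.
  by exists 0; split; [exists [::]; rewrite big_nil | rewrite big_nil rmorph0].
have [[a [Ia pa]] /liftK [b [Kb pb]]] := hs p (mem_head _ _).
have [_ [[t [ht ->]] pt]] : exists x, ideal_mul I K x /\ pi x = \sum_(q <- s) q.1 * q.2.
  by apply: IHs => q qs; apply: hs; rewrite inE qs orbT.
exists (\sum_(q <- (a, b) :: t) q.1 * q.2); split.
  exists ((a, b) :: t); split => // q; rewrite inE => /predU1P [-> //|]; exact: ht.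
by rewrite !big_cons rmorphD rmorphM pa pb pt.
Qed.

Lemma ideal_pow_lift : (forall y, exists x, pi x = y) ->
  forall n y, ideal_pow IB n y -> exists x, ideal_pow I n x /\ pi x = y.
Proof.
move=> surj; elim=> [|n IHn] y; first by have [x <-] := surj y; exists x.
exact: ideal_mul_lift.
Qed.

Lemma adic_cauchy_image (u : nat -> A) : adic_cauchy I u -> adic_cauchy IB (pi \o u).
Proof.
move=> uC n; have [N uN] := uC n; exists N => m k hm hk /=.
by rewrite -rmorphB; apply: ideal_pow_image; apply: uN.
Qed.

Lemma adic_converges_image (u : nat -> A) l :
  adic_converges I u l -> adic_converges IB (pi \o u) (pi l).
Proof.
move=> ul n; have [N uN] := ul n; exists N => m hm /=.
by rewrite -rmorphB; apply: ideal_pow_image; apply: uN.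
Qed.

End ImageIdeal.

Section KernelMeetsIdealTrivially.
Variables (A B : comPzRingType) (pi : {rmorphism A -> B}) (I : A -> Prop).
Hypothesis hI : is_ideal I.
Hypothesis surj : forall y, exists x, pi x = y.
Hypothesis ker_I0 : forall x, I x -> pi x = 0 -> x = 0.
Local Notation IB := (image_ideal pi I).

Let hIB : is_ideal IB := is_ideal_image surj hI.

Lemma ideal_pow_reflect n x : I x -> ideal_pow IB n (pi x) -> ideal_pow I n x.
Proof.
case: n => [//|n] Ix /(ideal_pow_lift surj) [j [Ij pj]].
suff -> : x = j by [].
apply/subr0_eq/ker_I0; last by rewrite rmorphB pj subrr.
exact: ideal_sub hI Ix (ideal_pow_succ_sub hI Ij).
Qed.

Lemma adic_separated_image : adic_separated I -> adic_separated IB.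
Proof.
move=> sepA y hy.
have [x [/(ideal_pow_succ_sub hI) Ix px]] := ideal_pow_lift surj (hy 1%N).
rewrite -px in hy *.
by rewrite (sepA x (fun n => ideal_pow_reflect Ix (hy n))) rmorph0.
Qed.

Lemma adic_separated_preimage : adic_separated IB -> adic_separated I.
Proof.
move=> sepB x hx; apply: ker_I0; first exact: ideal_pow_succ_sub hI (hx 1%N).
by apply: sepB => n; apply: ideal_pow_image.
Qed.

Lemma adic_complete_image : adic_complete I -> adic_complete IB.
Proof.
move=> [/adic_separated_image sepB cvgA]; split => // v vC.
have [N vN] := adic_cauchy_ideal hIB vC.
have [x0 px0] := surj (v N).
have [w hw] : exists w : nat -> A, forall m, (N <= m)%N -> pi (w m) = v m /\ I (x0 - w m).
  apply: (functional_choice (fun m x => (N <= m)%N -> pi x = v m /\ I (x0 - x))) => m.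
  case: (leqP N m) => hm; last by exists 0.
  have := vN N m (leqnn N) hm; rewrite -px0 => /image_ideal_lift [x hx].
  by exists x.
have wC : adic_cauchy I w.
  move=> n; have [Nn vNn] := vC n; exists (maxn N Nn) => m k.
  rewrite !geq_max => /andP [hm hmn] /andP [hk hkn].
  have [pwm Iwm] := hw m hm; have [pwk Iwk] := hw k hk.
  apply: ideal_pow_reflect; last by rewrite rmorphB pwm pwk; apply: vNn.
  by apply: ideal_sub_trans Iwk => //; rewrite -opprB; apply: ideal_opp.
have [l wl] := cvgA w wC.
exists (pi l) => n; have [Nn wNn] := adic_converges_image pi wl n.
exists (maxn N Nn) => m; rewrite geq_max => /andP [hm hmn].
by rewrite -(hw m hm).1; apply: wNn.
Qed.

Lemma adic_complete_preimage : adic_complete IB -> adic_complete I.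
Proof.
move=> [/adic_separated_preimage sepA cvgB]; split => // u uC.
have [y uy] := cvgB _ (adic_cauchy_image pi uC).
have [N uN] := adic_cauchy_ideal hI uC.
have [M uM] := adic_converges_ideal hIB uy.
pose P := maxn N M.
have [l [pl Il]] := image_ideal_lift (uM P (leq_maxr N M) : IB (pi (u P) - y)).
exists l => n; have [Mn uMn] := uy n.
exists (maxn P Mn) => m; rewrite !geq_max => /andP [/andP [hNm _] hmn].
apply: ideal_pow_reflect; last by rewrite rmorphB pl; apply: uMn.
exact: ideal_sub_trans hI (uN m P hNm (leq_maxl N M)) Il.
Qed.

End KernelMeetsIdealTrivially.

Unset Implicit Arguments.

(* B together with the surjective ring map pi : A -> B whose kernel is A_{I-tor}
   is (up to unique isomorphism) the quotient A / A_{I-tor}. *)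
Theorem proposition3p10 (A B : comPzRingType) (I : A -> Prop)
  (pi : {rmorphism A -> B}) :
  is_ideal I ->
  (forall x, itor I x -> I x -> x = 0) ->
  (forall y : B, exists x : A, pi x = y) ->
  (forall x : A, pi x = 0 <-> itor I x) ->
  (adic_separated I <-> adic_separated (image_ideal pi I)) /\
  (adic_complete I <-> adic_complete (image_ideal pi I)).
Proof.
move=> hI htor surj hker.
have ker_I0 x : I x -> pi x = 0 -> x = 0 by move=> Ix /hker tx; exact: htor tx Ix.
split; split.
- exact: adic_separated_image hI surj ker_I0.
- exact: adic_separated_preimage hI ker_I0.
- exact: adic_complete_image hI surj ker_I0.
- exact: adic_complete_preimage hI surj ker_I0.
Qed.
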